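(* Consider the single-path uplink system and problem in the context (antenna-moving-region constraints omitted), and assume $K(K-1)/2\le I_M+I_N$. Let $\mathcal{P}_1,\mathcal{P}_2$ be any partition of $\mathcal{P}=\{(k,q):1\le k<q\le K\}$ with $|\mathcal{P}_1|\le I_M$ and $|\mathcal{P}_2|\le I_N$, with elements enumerated as $\mathcal{P}_1=\{(k_1^{(i)},q_1^{(i)})\}_{i=1}^{|\mathcal{P}_1|}$ and $\mathcal{P}_2=\{(k_2^{(i)},q_2^{(i)})\}_{i=1}^{|\mathcal{P}_2|}$. Define $\mathbf{d}_x\in\mathbb{R}^{I_M}$ and $\mathbf{d}_y\in\mathbb{R}^{I_N}$ recursively by $$[\mathbf{d}_x]_i=\begin{cases}\dfrac{(\rho_i+1/m_i)\lambda}{|\vartheta_{k_1^{(i)}}-\vartheta_{q_1^{(i)}}|}, & 1\le i\le|\mathcal{P}_1|,\\[2mm] \sum_{j=1}^{i-1}(m_j-1)[\mathbf{d}_x]_j+d_{\min,x}, & |\mathcal{P}_1|+1\le i\le I_M,\end{cases}$$ $$[\mathbf{d}_y]_i=\begin{cases}\dfrac{(\tau_i+1/n_i)\lambda}{|\varphi_{k_2^{(i)}}-\varphi_{q_2^{(i)}}|}, & 1\le i\le|\mathcal{P}_2|,\\[2mm] \sum_{j=1}^{i-1}(n_j-1)[\mathbf{d}_y]_j+d_{\min,y}, & |\mathcal{P}_2|+1\le i\le I_N,\end{cases}$$ where $\rho_i$ is the smallest nonnegative integer such that $[\mathbf{d}_x]_i\ge\sum_{j=1}^{i-1}(m_j-1)[\mathbf{d}_x]_j+d_{\min,x}$,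 and $\tau_i$ is the smallest nonnegative integer such that $[\mathbf{d}_y]_i\ge\sum_{j=1}^{i-1}(n_j-1)[\mathbf{d}_y]_j+d_{\min,y}$. Then $\mathbf{x}^\star=\mathbf{U}^{\mathrm T}\mathbf{d}_x$ and $\mathbf{y}^\star=\mathbf{V}^{\mathrm T}\mathbf{d}_y$ are optimal APVs for the problem: there exist $\mathbf{W}$ and $\mathbf{p}$ such that $(\mathbf{x}^\star,\mathbf{y}^\star,\mathbf{W},\mathbf{p})$ is an optimal solution, attaining total transmit power $\sum_{k=1}^K\frac{\sigma^2(2^{r_k}-1)}{MN|b_k|^2}$.
   Context: A base station has a cross-linked movable antenna array with $M$ columns and $N$ rows; horizontal APV $\mathbf{x}=[x_1,\dots,x_M]^{\mathrm T}\in\mathbb{R}^M$, vertical APV $\mathbf{y}=[y_1,\dots,y_N]^{\mathrm T}\in\mathbb{R}^N$, antenna $(m,n)$ at $(x_m,y_n)$. $K$ single-antenna users; user $k$ has a single path with coefficient $b_k\ne0$ and virtual angles $\vartheta_k,\varphi_k\in[-1,1]$, with $\vartheta_k\ne\vartheta_q$ and $\varphi_k\ne\varphi_q$ for $k\ne q$. With wavelength $\lambda>0$, $\mathbf{h}_k(\mathbf{x},\mathbf{y})=b_k\,\mathbf{a}^{\mathrm{hor}}_k(\mathbf{x})\otimes\mathbf{a}^{\mathrm{ver}}_k(\mathbf{y})$, $\mathbf{a}^{\mathrm{hor}}_k(\mathbf{x})=[e^{-\mathrm{j}\frac{2\pi}{\lambda}x_m\vartheta_k}]_{m=1}^M$,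 $\mathbf{a}^{\mathrm{ver}}_k(\mathbf{y})=[e^{-\mathrm{j}\frac{2\pi}{\lambda}y_n\varphi_k}]_{n=1}^N$. With combining matrix $\mathbf{W}=[\mathbf{w}_1,\dots,\mathbf{w}_K]\in\mathbb{C}^{MN\times K}$, powers $p_k$, noise power $\sigma^2>0$, SINR $\gamma_k=\frac{|\mathbf{w}_k^{\mathrm H}\mathbf{h}_k|^2p_k}{\sum_{q\ne k}|\mathbf{w}_k^{\mathrm H}\mathbf{h}_q|^2p_q+\|\mathbf{w}_k\|_2^2\sigma^2}$. The problem: minimize $\sum_k p_k$ over $\mathbf{x},\mathbf{y},\mathbf{W},\mathbf{p}$ subject to $\log_2(1+\gamma_k)\ge r_k$, $p_k\ge0$ (given $r_k\ge0$), $x_{m+1}-x_m\ge d_{\min,x}$ ($1\le m\le M-1$), $y_{n+1}-y_n\ge d_{\min,y}$ ($1\le n\le N-1$), given $d_{\min,x},d_{\min,y}>0$ (no bounds on the moving region). Factorization notation: write $M=\prod_{i=1}^{I_M}m_i$ with primes $m_1\le\dots\le m_{I_M}$ ($I_M$ = number of prime factors with multiplicity); set $M_1=1$, $M_i=\prod_{j=1}^{i-1}m_j$ ($2\le i\le I_M$), $\mathbf{m}=[M_1,\dots,M_{I_M}]^{\mathrm T}$. Each integer $1\le m\le M$ is written uniquely as $m=\mathbf{u}_m^{\mathrm T}\mathbf{m}+1$ with $\mathbf{u}_m\in\mathbb{Z}^{I_M}$, $0\le[\mathbf{u}_m]_i<m_i$ (mixed-radix digits of $m-1$); $\mathbf{U}=[\mathbf{u}_1,\dots,\mathbf{u}_M]\in\mathbb{Z}^{I_M\times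 M}$. Analogously $N=\prod_{i=1}^{I_N}n_i$ with primes $n_1\le\dots\le n_{I_N}$, $N_1=1$, $N_i=\prod_{j=1}^{i-1}n_j$, $\mathbf{n}=[N_1,\dots,N_{I_N}]^{\mathrm T}$, $n=\mathbf{v}_n^{\mathrm T}\mathbf{n}+1$ with $0\le[\mathbf{v}_n]_i<n_i$, $\mathbf{V}=[\mathbf{v}_1,\dots,\mathbf{v}_N]\in\mathbb{Z}^{I_N\times N}$. *)

From HB Require Import structures.
From mathcomp Require Import all_boot all_order all_algebra.
From mathcomp Require Import all_classical all_reals.
From mathcomp Require Import exp trigo.
From mathcomp Require Import complex.
Set Implicit Arguments. Unset Strict Implicit. Unset Printing Implicit Defensive.
Import Order.TTheory GRing.Theory Num.Theory.
Local Open Scope ring_scope.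

Section Defs.
Variable R : realType.
Local Notation C := R[i].

(* prime factors of n with multiplicity, in nondecreasing order:
   [m_1; ...; m_{I}] with m_1 <= ... <= m_I and prod = n *)
Definition pfactors (n : nat) : seq nat :=
  flatten [seq nseq pe.2 pe.1 | pe <- prime_decomp n].

Definition radix (fac : seq nat) (i : nat) : nat :=
  \prod_(j < i) nth 1%N fac j.

(* [u_m]_i : i-th mixed-radix digit of (m-1); here m0 = m - 1 (0-based) *)
Definition digit (fac : seq nat) (m0 i : nat) : nat :=
  ((m0 %/ radix fac i) %% nth 1%N fac i)%N.

(* x* = U^T d  :  x*_m = sum_i [u_m]_i [d]_i *)
Definition apv (fac : seq nat) (d : nat -> R) (m0 : nat) : R :=
  \sum_(i < size fac) (digit fac m0 i)%:R * d i.

Definition Sprev (fac : seq nat) (d : nat -> R) (i : nat) : R :=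
  \sum_(j < i) ((nth 1%N fac j)%:R - 1) * d j.

(* recursive definition of d_x (resp. d_y): 'delta' is the list
   |theta_{k^(i)} - theta_{q^(i)}| for the enumerated pairs of P_1 (resp. P_2) *)
Definition dvec_spec (fac : seq nat) (delta : seq R) (lam dmin : R)
    (d : nat -> R) : Prop :=
  forall i : nat, (i < size fac)%N ->
    if (i < size delta)%N then
      exists rho : nat,
        d i = (rho%:R + 1 / (nth 1%N fac i)%:R) * lam / nth 0 delta i /\
        Sprev fac d i + dmin <= d i /\
        (forall r : nat, (r < rho)%N ->
           (r%:R + 1 / (nth 1%N fac i)%:R) * lam / nth 0 delta i
             < Sprev fac d i + dmin)
    else d i = Sprev fac d i + dmin.

Definition expj (t : R) : C := Complex (cos t) (sin t).
Definition abs2 (z : C) : R := complex.Re z ^+ 2 + complex.Im z ^+ 2.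

(* channel of user k, entry (m,n) of a^hor_k(x) (x) a^ver_k(y), times b_k *)
Definition chan (M N K : nat) (lam : R) (b : 'I_K -> C) (theta phi : 'I_K -> R)
    (x : 'I_M -> R) (y : 'I_N -> R) (k : 'I_K) (m : 'I_M) (n : 'I_N) : C :=
  b k * expj (- (2 * pi / lam) * x m * theta k)
      * expj (- (2 * pi / lam) * y n * phi k).

Definition inner (M N : nat) (w h : 'I_M -> 'I_N -> C) : C :=
  \sum_(m < M) \sum_(n < N) conjc (w m n) * h m n.

Definition norm2 (M N : nat) (w : 'I_M -> 'I_N -> C) : R :=
  \sum_(m < M) \sum_(n < N) abs2 (w m n).

Definition sinr (M N K : nat) (lam sigma2 : R) (b : 'I_K -> C)
    (theta phi : 'I_K -> R) (x : 'I_M -> R) (y : 'I_N -> R)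
    (W : 'I_K -> 'I_M -> 'I_N -> C) (p : 'I_K -> R) (k : 'I_K) : R :=
  let h := chan lam b theta phi x y in
  abs2 (inner (W k) (h k)) * p k /
  (\sum_(q < K | q != k) abs2 (inner (W k) (h q)) * p q
   + norm2 (W k) * sigma2).

Definition log2 (t : R) : R := ln t / ln 2.

Definition feasible (M N K : nat) (lam sigma2 dminx dminy : R) (b : 'I_K -> C)
    (theta phi r : 'I_K -> R) (x : 'I_M -> R) (y : 'I_N -> R)
    (W : 'I_K -> 'I_M -> 'I_N -> C) (p : 'I_K -> R) : Prop :=
  (forall k, r k <= log2 (1 + sinr lam sigma2 b theta phi x y W p k)) /\
  (forall k, 0 <= p k) /\
  (forall m1 m2 : 'I_M, m2 = m1.+1 :> nat -> dminx <= x m2 - x m1) /\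
  (forall n1 n2 : 'I_N, n2 = n1.+1 :> nat -> dminy <= y n2 - y n1).

Definition user_pairs (K : nat) : seq ('I_K * 'I_K) :=
  [seq kq : 'I_K * 'I_K <- [seq (k, q) | k <- enum 'I_K, q <- enum 'I_K] | (kq.1 < kq.2)%N].

End Defs.

(* Whatever the antenna positions, every channel h_k has squared norm
   MN |b_k|^2, so by Cauchy--Schwarz the SINR of user k is at most
   MN |b_k|^2 p_k / sigma^2, and meeting the rate r_k costs at least
   sigma^2 (2^r_k - 1) / (MN |b_k|^2).  Matched filters w_k = h_k attain this
   bound as soon as the channels are pairwise orthogonal.  For x = U^T d_x the
   inner product of h_k and h_q contains the factor
   sum_m exp(-j 2 pi x_m (theta_q - theta_k) / lambda); if the pair (k, q) is
   assigned to the digit i, this sum factors through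
   sum_(t < m_i) omega^t with omega = exp(-+ j 2 pi (rho_i + 1/m_i)), a
   nontrivial m_i-th root of unity, so it vanishes.  Finally
   x_(m+1) - x_m = [d_x]_i - sum_(j < i) (m_j - 1) [d_x]_j, where i is the
   position of the carry, and the choice of [d_x]_i makes this at least
   d_min,x. *)

From HB Require Import structures.
From mathcomp Require Import all_boot all_order all_algebra.
From mathcomp Require Import all_classical all_reals.
From mathcomp Require Import sequences exp trigo.
From mathcomp Require Import complex.
From mathcomp Require Import ring lra zify.
Set Implicit Arguments.
Unset Strict Implicit.
Unset Printing Implicit Defensive.

Import Order.TTheory GRing.Theory Num.Theory.
Local Open Scope ring_scope.

Section ComplexExponential.
Variable R : realType.
Local Notation C := R[i].

Lemma expjD (a b : R) : expj (a + b) = expj a * expj b.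
Proof. by rewrite /expj cosD sinD; simpc; congr Complex; ring. Qed.

Lemma expj0 : expj (0 : R) = 1.
Proof. by rewrite /expj cos0 sin0. Qed.

Lemma expjMn (n : nat) (t : R) : expj (n%:R * t) = expj t ^+ n.
Proof.
elim: n => [|n IHn]; first by rewrite mul0r expj0 expr0.
by rewrite -addn1 natrD mulrDl mul1r expjD IHn addn1 exprSr.
Qed.

Lemma expj_nat2pi (n : nat) : expj (n%:R * pi *+ 2) = 1 :> C.
Proof. by rewrite -mulrnAr expjMn /expj cos2pi sin2pi expr1n. Qed.

Lemma Re_expj (t : R) : complex.Re (expj t) = cos t.
Proof. by []. Qed.

Lemma conjc_expj (t : R) : conjc (expj t) = expj (- t).
Proof. by rewrite /expj /= cosN sinN. Qed.

Lemma conjcM (u v : C) : conjc (u * v) = conjc u * conjc v.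
Proof. exact: rmorphM. Qed.

Lemma abs2_ge0 (x : C) : 0 <= abs2 x.
Proof. by rewrite addr_ge0 ?sqr_ge0. Qed.

Lemma abs2_gt0 (x : C) : x != 0 -> 0 < abs2 x.
Proof.
case: x => a b nz; rewrite lt_def abs2_ge0 andbT /abs2 /=.
rewrite paddr_eq0 ?sqr_ge0 // !sqrf_eq0.
by apply: contra nz => /andP[/eqP-> /eqP->].
Qed.

Lemma abs2M (x y : C) : abs2 (x * y) = abs2 x * abs2 y.
Proof. by case: x => a b; case: y => c d; rewrite /abs2 /=; ring. Qed.

Lemma abs2_expj (t : R) : abs2 (expj t) = 1.
Proof. by rewrite /abs2 /= cos2Dsin2. Qed.

Lemma abs2_real (t : R) : abs2 t%:C%C = t ^+ 2.
Proof. by rewrite /abs2 /=; ring. Qed.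

Lemma mulJc_abs2 (x : C) : conjc x * x = (abs2 x)%:C%C.
Proof. by case: x => a b; rewrite /abs2; simpc; congr Complex; ring. Qed.

Lemma abs2_sum_conjM_le (T : finType) (w h : T -> C) :
  abs2 (\sum_t conjc (w t) * h t) <= (\sum_t abs2 (w t)) * (\sum_t abs2 (h t)).
Proof.
pose a t := complex.Re (w t); pose b t := complex.Im (w t).
pose c t := complex.Re (h t); pose d t := complex.Im (h t).
pose X t := a t * c t + b t * d t; pose Y t := a t * d t - b t * c t.
have -> : abs2 (\sum_t conjc (w t) * h t) = (\sum_t X t) ^+ 2 + (\sum_t Y t) ^+ 2.
  rewrite /abs2 !raddf_sum; congr (_ ^+ 2 + _ ^+ 2); apply: eq_bigr => t _;
  by rewrite /X /Y /a /b /c /d; case: (w t) => ? ?; case: (h t) => ? ? /=; ring.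
pose f t := abs2 (w t); pose g t := abs2 (h t).
(* Lagrange's identity: the Cauchy--Schwarz defect is half a sum of squares *)
pose B s t := f s * g t + f t * g s - 2 * (X s * X t + Y s * Y t).
have B_ge0 s t : 0 <= B s t.
  have -> : B s t = (c s * a t - d s * b t - c t * a s + d t * b s) ^+ 2
                  + (c s * b t + d s * a t - c t * b s - d t * a s) ^+ 2.
    by rewrite /B /f /g /abs2 /X /Y; ring.
  by rewrite addr_ge0 ?sqr_ge0.
have sumB : \sum_s \sum_t B s t = 2 * ((\sum_t f t) * (\sum_t g t))
                                - 2 * ((\sum_t X t) ^+ 2 + (\sum_t Y t) ^+ 2).
  rewrite /B; under eq_bigr do rewrite sumrB big_split /= -(mulr_sumr _ _ _ 2) big_split /=.
  rewrite sumrB big_split /= -(mulr_sumr _ _ _ 2) big_split /= [X in _ + X - _]exchange_big /=.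
  by rewrite -!big_distrlr /= !expr2; ring.
have : 0 <= \sum_s \sum_t B s t by apply: sumr_ge0 => s _; apply: sumr_ge0.
rewrite sumB; lra.
Qed.

End ComplexExponential.

Lemma sum_expr_root_unity_eq0 (F : idomainType) (z : F) (p : nat) :
  z ^+ p = 1 -> z != 1 -> \sum_(t < p) z ^+ t = 0.
Proof.
move=> zp z1; have := subrX1 z p; rewrite zp subrr => /esym/eqP.
by rewrite mulf_eq0 subr_eq0 (negbTE z1) => /eqP.
Qed.

Lemma cos_2pi_div_lt1 (R : realType) (p : nat) : (1 < p)%N -> cos (pi *+ 2 / p%:R) < 1 :> R.
Proof.
move=> p_gt1; have p_gt0 : (0 : R) < p%:R by rewrite ltr0n (ltn_trans _ p_gt1).
have sin_gt0 : 0 < sin (pi / p%:R : R).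
  apply: sin_gt0_pi; rewrite divr_gt0 ?pi_gt0 //=.
  by rewrite ltr_pdivrMr // ltr_pMr ?pi_gt0 // ltr1n.
rewrite mulrnAl cos_mulr2n cos2sin2.
have := exprn_gt0 2 sin_gt0; lra.
Qed.

Lemma expj_root_unity (R : realType) (p rho : nat) (u : R) : (1 < p)%N ->
  `|u| = pi *+ 2 * (rho%:R + 1 / p%:R) -> expj u ^+ p = 1 /\ expj u != 1.
Proof.
move=> p_gt1 norm_u.
have p_neq0 : p%:R != 0 :> R by rewrite pnatr_eq0 -lt0n (ltn_trans _ p_gt1).
have root : expj `|u| ^+ p = 1.
  rewrite -expjMn norm_u (_ : _ * _ = (p * rho + 1)%N%:R * pi *+ 2) ?expj_nat2pi //.
  by rewrite natrD natrM -mulrnAr; field.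
have cos_lt1 : cos u < 1.
  rewrite -cos_norm norm_u.
  have -> : pi *+ 2 * (rho%:R + 1 / p%:R) = rho%:R * pi *+ 2 + pi *+ 2 / p%:R :> R.
    by rewrite -mulrnAr; field.
  rewrite -Re_expj expjD expj_nat2pi mul1r Re_expj.
  exact: cos_2pi_div_lt1.
split.
  have [u_ge0|u_lt0] := leP 0 u; first by rewrite -root ger0_norm.
  by rewrite -[u]opprK -(ltr0_norm u_lt0) -conjc_expj -rmorphXn root rmorph1.
apply/eqP => expj1; move: cos_lt1.
by rewrite -Re_expj expj1 ltxx.
Qed.

Lemma sum_ord_mul (V : nmodType) (A B : nat) (F : nat -> V) :
  \sum_(m < A * B) F m = \sum_(s < B) \sum_(a < A) F (a + s * A)%N.
Proof.
rewrite -(big_mkord xpredT F) mulnC big_nat_mul big_mkord; apply: eq_bigr => s _.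
by rewrite -{1}(add0n (s * A)%N) big_addn mulSn addnK big_mkord.
Qed.

Section MixedRadix.
Variable R : realType.
Variable fac : seq nat.
Hypothesis fac_gt0 : forall j, (0 < nth 1%N fac j)%N.

Lemma radix0 : radix fac 0 = 1%N.
Proof. by rewrite /radix big_ord0. Qed.

Lemma radixS j : radix fac j.+1 = (radix fac j * nth 1%N fac j)%N.
Proof. by rewrite /radix big_ord_recr. Qed.

Lemma radix_gt0 j : (0 < radix fac j)%N.
Proof. by elim: j => [|j IHj]; rewrite ?radix0 // radixS muln_gt0 IHj fac_gt0. Qed.

Lemma radix_dvdn j k : (j <= k)%N -> (radix fac j %| radix fac k)%N.
Proof.
move=> /subnK <-; elim: (k - j)%N => [|n IHn]; first by rewrite add0n.
by rewrite addSn radixS dvdn_mulr.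
Qed.

Lemma digit_natE m j : (digit fac m j)%:R
  = (m %/ radix fac j)%:R - (nth 1%N fac j)%:R * (m %/ radix fac j.+1)%:R :> R.
Proof.
rewrite /digit radixS divnMA; set n := (m %/ radix fac j)%N; set p := nth 1%N fac j.
by rewrite {2}(divn_eq n p) natrD natrM; ring.
Qed.

Lemma SprevS (d : nat -> R) k :
  Sprev fac d k.+1 = Sprev fac d k + ((nth 1%N fac k)%:R - 1) * d k.
Proof. by rewrite /Sprev big_ord_recr. Qed.

Lemma sum_carry (b : nat -> bool) (d : nat -> R) n :
  b 0%N -> (forall j, b j.+1 -> b j) -> ~~ b n ->
  exists2 i, (i < n)%N &
    \sum_(j < n) ((b j)%:R - (nth 1%N fac j)%:R * (b j.+1)%:R) * d j = d i - Sprev fac d i.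
Proof.
move=> b0 bS.
pose S k := \sum_(j < k) ((b j)%:R - (nth 1%N fac j)%:R * (b j.+1)%:R) * d j.
have S_true k : b k -> S k = - Sprev fac d k.
  elim: k => [|k IHk] bk; first by rewrite /S /Sprev !big_ord0 oppr0.
  rewrite /S big_ord_recr /= -/(S k) IHk; last exact: bS.
  by rewrite SprevS bk (bS _ bk) /=; ring.
elim: n => [|n IHn] bn; first by rewrite b0 in bn.
rewrite big_ord_recr /= (negbTE bn).
case bn' : (b n).
- by exists n => //; rewrite -/(S n) S_true //=; ring.
- by have [i lt_i ->] := IHn (negbT bn'); exists i; [exact: ltnW | rewrite /=; ring].
Qed.

Lemma apv_succB (d : nat -> R) m : (m.+1 < radix fac (size fac))%N ->
  exists2 i, (i < size fac)%N & apv fac d m.+1 - apv fac d m = d i - Sprev fac d i.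
Proof.
(* [b j] holds iff all the digits below [j] roll over from [m] to [m.+1]. *)
move=> lt_m; pose b j := (radix fac j %| m.+1)%N.
have b0 : b 0%N by rewrite /b radix0 dvd1n.
have bS j : b j.+1 -> b j by apply/dvdn_trans/radix_dvdn/leqnSn.
have bN : ~~ b (size fac) by apply/negP => /(dvdn_leq (ltn0Sn m)); rewrite leqNgt lt_m.
have [i lt_i carry] := sum_carry d b0 bS bN.
exists i => //; rewrite -carry /apv -sumrB; apply: eq_bigr => j _.
by rewrite -mulrBl !digit_natE /b !divnS ?radix_gt0 // !natrD; ring.
Qed.

Lemma digit_eq_mod j n n' :
  (n = n' %[mod radix fac j.+1])%N -> digit fac n j = digit fac n' j.
Proof. by rewrite /digit !modn_divl (mulnC (nth 1%N fac j)) -radixS => ->. Qed.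

Lemma digit_eq_div k j n n' : (k <= j)%N ->
  (n %/ radix fac k = n' %/ radix fac k)%N -> digit fac n j = digit fac n' j.
Proof.
move=> le_kj eq_div; rewrite /digit -(divnK (radix_dvdn le_kj)) mulnC.
by rewrite !divnMA eq_div.
Qed.

Lemma digit_shift i a t s j :
  (a < radix fac i)%N -> (t < nth 1%N fac i)%N ->
  digit fac (a + t * radix fac i + s * radix fac i.+1) j
  = (digit fac (a + s * radix fac i.+1) j + (j == i) * t)%N.
Proof.
set A := radix fac i; set p := nth 1%N fac i => lt_a lt_t.
have A_gt0 : (0 < A)%N by exact: radix_gt0.
have p_gt0 : (0 < p)%N by exact: fac_gt0.
have Ap : radix fac i.+1 = (A * p)%N by exact: radixS.
case: (ltngtP j i) => [lt_ji|lt_ij|->].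
- rewrite mul0n addn0; apply: digit_eq_mod.
  have modD c : (radix fac j.+1 %| c)%N -> ((a + c) %% radix fac j.+1 = a %% radix fac j.+1)%N.
    by move=> /dvdnP[e ->]; rewrite addnC modnMDl.
  by rewrite -addnA !modD // ?dvdn_add // dvdn_mull // radix_dvdn // ltnW.
- rewrite mul0n addn0; apply: (digit_eq_div lt_ij).
  have lt_at : (a + t * A < A * p)%N by nia.
  have lt_a' : (a < A * p)%N by nia.
  by rewrite Ap !divnDMl ?muln_gt0 ?A_gt0 ?p_gt0 // !divn_small.
- rewrite mul1n /digit -/A -/p Ap.
  have -> : (a + t * A + s * (A * p) = a + (t + s * p) * A)%N by ring.
  have -> : (a + s * (A * p) = a + (s * p) * A)%N by ring.
  rewrite !divnDMl // divn_small // !add0n [(t + _)%N]addnC.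
  by rewrite modnMDl modnMl modn_small.
Qed.

Lemma apv_shift (d : nat -> R) i a t s : (i < size fac)%N ->
  (a < radix fac i)%N -> (t < nth 1%N fac i)%N ->
  apv fac d (a + t * radix fac i + s * radix fac i.+1)
  = apv fac d (a + s * radix fac i.+1) + t%:R * d i.
Proof.
move=> lt_i lt_a lt_t; rewrite /apv.
under eq_bigr => j _ do rewrite (digit_shift s j lt_a lt_t) natrD mulrDl.
rewrite big_split /=; congr (_ + _).
rewrite (bigD1 (Ordinal lt_i)) //= eqxx mul1n big1 ?addr0 // => j.
by rewrite -val_eqE /= => /negbTE->; rewrite mul0n mul0r.
Qed.

(* The digit [i] runs over a full period of the nontrivial root of unity
   [expj (c * d i)] while the other digits stay fixed. *)
Lemma sum_expj_apv_eq0 (d : nat -> R) (c : R) i : (i < size fac)%N ->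
  expj (c * d i) ^+ nth 1%N fac i = 1 -> expj (c * d i) != 1 ->
  \sum_(m < radix fac (size fac)) expj (c * apv fac d m) = 0.
Proof.
move=> lt_i root nontriv.
have /dvdnP[B ->] : (radix fac i.+1 %| radix fac (size fac))%N by exact: radix_dvdn.
rewrite mulnC (sum_ord_mul _ _ (fun m => expj (c * apv fac d m))) big1 // => s _.
rewrite radixS (sum_ord_mul _ _ (fun u => expj (c * apv fac d (u + s * _)))).
rewrite exchange_big big1 //= => a _.
under eq_bigr => t _ do rewrite -radixS apv_shift // mulrDr expjD mulrCA expjMn.
by rewrite -mulr_sumr sum_expr_root_unity_eq0 ?mulr0.
Qed.

End MixedRadix.

Lemma pfactors_prime n j : (j < size (pfactors n))%N -> prime (nth 1%N (pfactors n) j).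
Proof.
move=> lt_j; have := mem_nth 1%N lt_j.
rewrite /pfactors => /flattenP[s /mapP[[p e] pe_in ->]] /nseqP[-> _].
by have [] := mem_prime_decomp pe_in.
Qed.

Lemma pfactors_gt0 n j : (0 < nth 1%N (pfactors n) j)%N.
Proof.
have [lt_j|le_j] := ltnP j (size (pfactors n)); last by rewrite nth_default.
exact/prime_gt0/pfactors_prime.
Qed.

Lemma radix_pfactors n : (0 < n)%N -> radix (pfactors n) (size (pfactors n)) = n.
Proof.
move=> n_gt0; rewrite /radix -(big_mkord xpredT (nth 1%N (pfactors n))).
rewrite -(big_nth 1%N xpredT id) /pfactors big_flatten /= big_map.
rewrite {2}(prod_prime_decomp n_gt0); apply: eq_bigr => -[p e] _ /=.
by rewrite big_nseq iter_muln muln1.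
Qed.

Section Channel.
Variable R : realType.
Local Notation C := R[i].
Variables (M N K : nat) (lam : R) (b : 'I_K -> C) (theta phi : 'I_K -> R)
  (x : 'I_M -> R) (y : 'I_N -> R).
Local Notation h := (chan lam b theta phi x y).

Lemma inner_chan k q : inner (h k) (h q)
  = conjc (b k) * b q *
    ((\sum_(m < M) expj (- (2 * pi / lam) * (theta q - theta k) * x m)) *
     (\sum_(n < N) expj (- (2 * pi / lam) * (phi q - phi k) * y n))).
Proof.
rewrite /inner mulr_suml mulr_sumr; apply: eq_bigr => m _.
rewrite !mulr_sumr; apply: eq_bigr => n _.
have -> : expj (- (2 * pi / lam) * (theta q - theta k) * x m)
  = expj (- (- (2 * pi / lam) * x m * theta k)) * expj (- (2 * pi / lam) * x m * theta q).
  by rewrite -expjD; congr expj; ring.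
have -> : expj (- (2 * pi / lam) * (phi q - phi k) * y n)
  = expj (- (- (2 * pi / lam) * y n * phi k)) * expj (- (2 * pi / lam) * y n * phi q).
  by rewrite -expjD; congr expj; ring.
by rewrite /chan !conjcM !conjc_expj; ring.
Qed.

Lemma norm2_chan k : norm2 (h k) = (M * N)%:R * abs2 (b k).
Proof.
rewrite /norm2 /chan.
under eq_bigr do under eq_bigr do rewrite !abs2M !abs2_expj !mulr1.
by rewrite !sumr_const !card_ord -mulrnA mulr_natl mulnC.
Qed.

End Channel.

Section CombinerInnerProduct.
Variable R : realType.
Variables (M N : nat).
Implicit Types w u : 'I_M -> 'I_N -> R[i].

Lemma inner_diag w : inner w w = (norm2 w)%:C%C.
Proof.
rewrite /inner /norm2 rmorph_sum; apply: eq_bigr => m _.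
by rewrite rmorph_sum; apply: eq_bigr => n _; exact: mulJc_abs2.
Qed.

Lemma norm2_ge0 w : 0 <= norm2 w.
Proof. by apply: sumr_ge0 => m _; apply: sumr_ge0 => n _; exact: abs2_ge0. Qed.

Lemma abs2_inner_le w u : abs2 (inner w u) <= norm2 w * norm2 u.
Proof.
rewrite /inner /norm2 !pair_bigA /=.
exact: (abs2_sum_conjM_le (fun mn : 'I_M * 'I_N => w mn.1 mn.2) (fun mn => u mn.1 mn.2)).
Qed.

End CombinerInnerProduct.

Section Log2.
Variable R : realType.

Lemma ln2_gt0 : 0 < ln (2 : R).
Proof. by rewrite ln_gt0 // ltr1n. Qed.

Lemma powR2E (r : R) : 2 `^ r = expR (r * ln 2).
Proof. by rewrite /powR pnatr_eq0. Qed.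

Lemma powR2_ge1 (r : R) : 0 <= r -> 1 <= 2 `^ r.
Proof.
move=> r_ge0; rewrite powR2E; apply: le_trans (expR_ge1Dx _).
by rewrite lerDl mulr_ge0 // ltW // ln2_gt0.
Qed.

Lemma log2_powR (r : R) : log2 (2 `^ r) = r.
Proof. by rewrite /log2 ln_powR mulfK // gt_eqF // ln2_gt0. Qed.

Lemma powR2_le_of_log2 (r s : R) : 0 < s -> r <= log2 s -> 2 `^ r <= s.
Proof.
move=> s_gt0; rewrite /log2 ler_pdivlMr ?ln2_gt0 // => le_r.
by rewrite powR2E -[leRHS]lnK ?posrE // ler_expR.
Qed.

End Log2.

Lemma sinr_noise_le (F : realFieldType) (A I n2 s2 G P : F) :
  0 <= I -> 0 <= n2 -> 0 < s2 -> 0 <= G -> 0 <= P -> A <= n2 * G ->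
  A * P / (I + n2 * s2) * s2 <= G * P.
Proof.
move=> I_ge0 n2_ge0 s2_gt0 G_ge0 P_ge0 le_A.
have GP_ge0 : 0 <= G * P by exact: mulr_ge0.
move: n2_ge0; rewrite le_eqVlt eq_sym => /orP[/eqP n2_0|n2_gt0].
  rewrite n2_0 mul0r in le_A; rewrite n2_0 mul0r addr0; apply: le_trans GP_ge0.
  by rewrite mulr_le0_ge0 ?(ltW s2_gt0) // mulr_le0_ge0 ?invr_ge0 // mulr_le0_ge0.
have D_gt0 : 0 < I + n2 * s2 by rewrite ltr_wpDl // mulr_gt0.
rewrite mulrAC ler_pdivrMr //; apply: le_trans (_ : n2 * G * P * s2 <= _).
  by rewrite ler_wpM2r ?(ltW s2_gt0) // ler_wpM2r.
by rewrite mulrDr (_ : G * P * (n2 * s2) = n2 * G * P * s2) ?lerDr ?mulr_ge0 //; ring.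
Qed.

Section SINR.
Variable R : realType.
Variables (M N K : nat) (lam sigma2 : R) (b : 'I_K -> R[i]) (theta phi : 'I_K -> R)
  (x : 'I_M -> R) (y : 'I_N -> R).
Local Notation h := (chan lam b theta phi x y).
Hypotheses (M_gt0 : (0 < M)%N) (N_gt0 : (0 < N)%N) (sigma2_gt0 : 0 < sigma2).

Lemma sinr_ge0 W p k : (forall q, 0 <= p q) -> 0 <= sinr lam sigma2 b theta phi x y W p k.
Proof.
move=> p_ge0; apply: divr_ge0; first by rewrite mulr_ge0 ?abs2_ge0.
rewrite addr_ge0 ?mulr_ge0 ?norm2_ge0 ?(ltW sigma2_gt0) //.
by apply: sumr_ge0 => q _; rewrite mulr_ge0 ?abs2_ge0.
Qed.

(* Cauchy--Schwarz, after dropping the interference term. *)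
Lemma sinr_mul_noise_le W p k : (forall q, 0 <= p q) ->
  sinr lam sigma2 b theta phi x y W p k * sigma2 <= (M * N)%:R * abs2 (b k) * p k.
Proof.
move=> p_ge0; apply: sinr_noise_le.
- by apply: sumr_ge0 => q _; rewrite mulr_ge0 ?abs2_ge0.
- exact: norm2_ge0.
- exact: sigma2_gt0.
- by rewrite mulr_ge0 ?abs2_ge0.
- exact: p_ge0.
- by rewrite -(norm2_chan lam b theta phi x y); exact: abs2_inner_le.
Qed.

Lemma sinr_power_lower_bound (r : 'I_K -> R) W p k : b k != 0 -> (forall q, 0 <= p q) ->
  r k <= log2 (1 + sinr lam sigma2 b theta phi x y W p k) ->
  sigma2 * (2 `^ r k - 1) / ((M * N)%:R * abs2 (b k)) <= p k.
Proof.
move=> bk_neq0 p_ge0 rate.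
have G_gt0 : 0 < (M * N)%:R * abs2 (b k).
  by rewrite mulr_gt0 ?abs2_gt0 // ltr0n muln_gt0 M_gt0 N_gt0.
have := sinr_ge0 W k p_ge0; move: rate.
set s := sinr _ _ _ _ _ _ _ _ _ _ => rate s_ge0.
have pow_le : 2 `^ r k <= 1 + s by apply: powR2_le_of_log2 rate; lra.
rewrite ler_pdivrMr // (mulrC sigma2) (mulrC (p k)).
apply: (le_trans _ (sinr_mul_noise_le W k p_ge0)).
by rewrite -/s ler_wpM2r ?(ltW sigma2_gt0) //; lra.
Qed.

Lemma sinr_matched_filter p k : b k != 0 ->
  (forall q, k != q -> inner (h k) (h q) = 0) ->
  sinr lam sigma2 b theta phi x y h p k = (M * N)%:R * abs2 (b k) * p k / sigma2.
Proof.
move=> bk_neq0 orth; rewrite /sinr big1 => [|q qk]; last first.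
  by rewrite orth 1?eq_sym // /abs2 /= expr0n /= addr0 mul0r.
rewrite add0r inner_diag abs2_real norm2_chan.
by field; rewrite gt_eqF // gt_eqF ?abs2_gt0 // !pnatr_eq0 -!lt0n M_gt0 N_gt0.
Qed.

End SINR.

Lemma dvec_spec_gap (R : realType) fac delta (lam dmin : R) d i :
  dvec_spec fac delta lam dmin d -> (i < size fac)%N -> dmin <= d i - Sprev fac d i.
Proof.
move=> spec /spec; case: ifP => _ => [[rho [_ [le_d _]]] | ->]; lra.
Qed.

Lemma apv_pfactors_gap (R : realType) n delta (lam dmin : R) d (m1 m2 : 'I_n) :
  (0 < n)%N -> dvec_spec (pfactors n) delta lam dmin d -> m2 = m1.+1 :> nat ->
  dmin <= apv (pfactors n) d m2 - apv (pfactors n) d m1.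
Proof.
move=> n_gt0 spec m2E.
have lt_m : (m1.+1 < radix (pfactors n) (size (pfactors n)))%N.
  by rewrite radix_pfactors // -m2E ltn_ord.
rewrite m2E; have [i lt_i ->] := apv_succB (@pfactors_gt0 n) d lt_m.
exact: dvec_spec_gap spec lt_i.
Qed.

Lemma expj_dvec_root_unity (R : realType) (lam D : R) (p rho : nat) :
  lam != 0 -> D != 0 -> (1 < p)%N ->
  let u := - (2 * pi / lam) * D * ((rho%:R + 1 / p%:R) * lam / `|D|) in
  expj u ^+ p = 1 /\ expj u != 1.
Proof.
move=> lam_neq0 D_neq0 p_gt1 u; apply: (expj_root_unity (rho := rho) p_gt1).
have p_neq0 : p%:R != 0 :> R by rewrite pnatr_eq0 -lt0n (ltn_trans _ p_gt1).
have -> : u = - (pi *+ 2 * (rho%:R + 1 / p%:R)) * (D / `|D|).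
  by rewrite /u mulr2n; field; rewrite lam_neq0 normr_eq0 D_neq0 p_neq0.
rewrite normrM normrN normf_div normr_id divff ?normr_eq0 // mulr1 ger0_norm //.
have pi2_ge0 : 0 <= pi *+ 2 :> R by rewrite mulrn_wge0 // ltW // pi_gt0.
by rewrite mulr_ge0 // addr_ge0 ?divr_ge0.
Qed.

Lemma sum_expj_apv_pair_eq0 (R : realType) K n (P : seq ('I_K * 'I_K)) (ang : 'I_K -> R)
    (lam dmin : R) d (k q : 'I_K) :
  (0 < n)%N -> lam != 0 -> injective ang -> (size P <= size (pfactors n))%N ->
  dvec_spec (pfactors n) [seq `|ang kq.1 - ang kq.2| | kq <- P] lam dmin d ->
  k != q -> ((k, q) \in P) || ((q, k) \in P) ->
  \sum_(m < n) expj (- (2 * pi / lam) * (ang q - ang k) * apv (pfactors n) d m) = 0.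
Proof.
move=> n_gt0 lam_neq0 ang_inj size_P spec neq_kq kq_in.
have [kq kq_P delta_kq] : exists2 kq, kq \in P & `|ang kq.1 - ang kq.2| = `|ang q - ang k|.
  by case/orP: kq_in => ?; [exists (k, q); rewrite //= distrC | exists (q, k)].
have lt_iP : (index kq P < size P)%N by rewrite index_mem.
have lt_i := leq_trans lt_iP size_P.
move: (spec _ lt_i); rewrite size_map lt_iP (nth_map kq) // nth_index // delta_kq.
move=> [rho [d_i _]].
have D_neq0 : ang q - ang k != 0 by rewrite subr_eq0 (inj_eq ang_inj) eq_sym.
have p_gt1 := prime_gt1 (pfactors_prime lt_i).
have [root nontriv] := expj_dvec_root_unity rho lam_neq0 D_neq0 p_gt1.
rewrite -d_i in root nontriv.
by have := sum_expj_apv_eq0 (@pfactors_gt0 n) lt_i root nontriv; rewrite radix_pfactors.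
Qed.

Lemma mem_user_pairs K (k q : 'I_K) : ((k, q) \in user_pairs K) = (k < q)%N.
Proof. by rewrite mem_filter /= andb_idr // => _; rewrite allpairs_f ?mem_enum. Qed.

Lemma user_pairs_cover K (P1 P2 : seq ('I_K * 'I_K)) (k q : 'I_K) :
  perm_eq (P1 ++ P2) (user_pairs K) -> k != q ->
  ((k, q) \in P1) || ((q, k) \in P1) \/ ((k, q) \in P2) || ((q, k) \in P2).
Proof.
move=> part neq_kq.
have mem_P (i j : 'I_K) : (i < j)%N -> ((i, j) \in P1) || ((i, j) \in P2).
  by rewrite -mem_cat (perm_mem part) mem_user_pairs.
case: (ltngtP k q) => [lt_kq|lt_qk|/val_inj eq_kq]; last by rewrite eq_kq eqxx in neq_kq.
- by case/orP: (mem_P _ _ lt_kq) => ->; [left | right].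
- by case/orP: (mem_P _ _ lt_qk) => ->; rewrite orbT; [left | right].
Qed.

Theorem theorem3 (R : realType) (M N K : nat)
  (lam sigma2 dminx dminy : R) (b : 'I_K -> R[i]) (theta phi r : 'I_K -> R)
  (HM : (0 < M)%N) (HN : (0 < N)%N)
  (Hlam : 0 < lam) (Hsigma : 0 < sigma2) (Hdx : 0 < dminx) (Hdy : 0 < dminy)
  (Hb : forall k, b k != 0)
  (Htheta : forall k, -1 <= theta k <= 1) (Hphi : forall k, -1 <= phi k <= 1)
  (Htheta_inj : injective theta) (Hphi_inj : injective phi)
  (Hr : forall k, 0 <= r k)
  (HK : (K * (K - 1) %/ 2 <= size (pfactors M) + size (pfactors N))%N)
  (P1 P2 : seq ('I_K * 'I_K))
  (Hpart : perm_eq (P1 ++ P2) (user_pairs K))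
  (HP1 : (size P1 <= size (pfactors M))%N) (HP2 : (size P2 <= size (pfactors N))%N)
  (dx dy : nat -> R)
  (Hdxs : dvec_spec (pfactors M) [seq `|theta kq.1 - theta kq.2| | kq <- P1] lam dminx dx)
  (Hdys : dvec_spec (pfactors N) [seq `|phi kq.1 - phi kq.2| | kq <- P2] lam dminy dy) :
  let xs := fun m : 'I_M => apv (pfactors M) dx m in
  let ys := fun n : 'I_N => apv (pfactors N) dy n in
  exists (W : 'I_K -> 'I_M -> 'I_N -> R[i]) (p : 'I_K -> R),
    feasible lam sigma2 dminx dminy b theta phi r xs ys W p /\
    \sum_(k < K) p k
      = \sum_(k < K) sigma2 * (2 `^ r k - 1) / ((M * N)%:R * abs2 (b k)) /\
    (forall (x : 'I_M -> R) (y : 'I_N -> R) (W' : 'I_K -> 'I_M -> 'I_N -> R[i])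
            (p' : 'I_K -> R),
       feasible lam sigma2 dminx dminy b theta phi r x y W' p' ->
       \sum_(k < K) p k <= \sum_(k < K) p' k).
Proof.
move=> xs ys; set h := chan lam b theta phi xs ys.
have lam_neq0 : lam != 0 by rewrite gt_eqF.
have orth k q : k != q -> inner (h k) (h q) = 0.
  move=> neq_kq; rewrite inner_chan.
  case: (user_pairs_cover Hpart neq_kq) => [in_P1|in_P2].
  - by rewrite (sum_expj_apv_pair_eq0 HM lam_neq0 Htheta_inj HP1 Hdxs neq_kq in_P1)
      !(mul0r, mulr0).
  - by rewrite (sum_expj_apv_pair_eq0 HN lam_neq0 Hphi_inj HP2 Hdys neq_kq in_P2)
      !(mul0r, mulr0).
pose p k := sigma2 * (2 `^ r k - 1) / ((M * N)%:R * abs2 (b k)).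
have snr_p k : (M * N)%:R * abs2 (b k) * p k / sigma2 = 2 `^ r k - 1.
  by rewrite /p; field; rewrite gt_eqF // gt_eqF ?abs2_gt0 // !pnatr_eq0 -!lt0n HM HN.
exists h, p; split; [split; [|split; [|split]] | split].
- move=> k; rewrite (sinr_matched_filter HM HN Hsigma p (Hb k) (orth k)) snr_p.
  by rewrite addrC subrK log2_powR.
- move=> k; rewrite /p divr_ge0 ?mulr_ge0 ?ler0n ?abs2_ge0 ?(ltW Hsigma) //.
  by rewrite subr_ge0 powR2_ge1.
- by move=> m1 m2; apply: apv_pfactors_gap Hdxs.
- by move=> n1 n2; apply: apv_pfactors_gap Hdys.
- by [].
- move=> x y W' p' [rate [p'_ge0 _]]; apply: ler_sum => k _.
  exact: sinr_power_lower_bound.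
Qed.
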